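(* Let $p$ be a prime and let $\mathrm{E}_p(X)=\sum_{n=0}^{\infty} a_n X^n\in\mathbb{F}_p[[X]]$ be the reduction modulo $p$ of the Artin-Hasse exponential series. Define $c_{jp}=a_{jp}$ for $0\le j<p-1$ and $c_{(p-1)p}=a_{(p-1)p}+1$. Then for all integers $0\le k<p$ and $0\le r<p$ we have, in $\mathbb{F}_p$, \[ a_{rp+k}=(-1)^{k+1}\sum_{j=0}^{r}{p-k \brack j+1}\,c_{(r-j)p}. \]
   Context: The Artin-Hasse exponential series is $\mathrm{AH}(X)=\exp\bigl(\sum_{i=0}^{\infty}X^{p^i}/p^i\bigr)\in\mathbb{Q}[[X]]$; its coefficients are $p$-integral, so it can be reduced modulo $p$, giving $\mathrm{E}_p(X)\in\mathbb{F}_p[[X]]$. The unsigned Stirling numbers of the first kind ${n \brack i}$ ($0\le i\le n$) are defined by $y(y+1)\cdots(y+n-1)=\sum_{i=0}^{n}{n \brack i}y^i$ in $\mathbb{Z}[y]$, with ${n\brack i}=0$ for $i>n$; they are read modulo $p$ in the formula. *)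

From mathcomp Require Import all_boot all_order all_algebra.
Set Implicit Arguments. Unset Strict Implicit. Unset Printing Implicit Defensive.
Import Order.TTheory GRing.Theory Num.Theory.
Local Open Scope ring_scope.

Definition ps := nat -> rat.

Definition ps_one : ps := fun n => (n == 0%N)%:R.

Definition ps_mul (f g : ps) : ps :=
  fun n => \sum_(i < n.+1) f i * g (n - i)%N.

Definition ps_pow (f : ps) (m : nat) : ps := iter m (ps_mul f) ps_one.

(* exp(f) = sum_m f^m / m!, for f with zero constant term: the coefficient
   of X^n only involves m <= n. *)
Definition ps_exp (f : ps) : ps :=
  fun n => \sum_(m < n.+1) ps_pow f m n / (m`!)%:R.

(* sum_{i >= 0} X^(p^i) / p^i *)
Definition AH_arg (p : nat) : ps :=
  fun n => if [exists i : 'I_n.+1, (p ^ i)%N == n] then (n%:R)^-1 else 0.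

Definition AH (p : nat) : ps := ps_exp (AH_arg p).

(* Reduction modulo p of a (p-integral) rational number. *)
Definition redp (p : nat) (q : rat) : 'F_p :=
  (numq q)%:~R / (denq q)%:~R.

Definition Ep_coef (p n : nat) : 'F_p := redp p (AH p n).

Definition stirling1 (n i : nat) : int :=
  (\prod_(m < n) ('X + (m%:Z)%:P) : {poly int})`_i.

From mathcomp Require Import all_boot all_order all_algebra all_field zify ring.
Import GRing.Theory Num.Theory.
Local Open Scope ring_scope.

(* Differentiating AH = exp (sum_i X^(p^i) / p^i) gives, over Q,
   n a_n = a_(n-1) + a_(n-p) for 0 < n < p^2.  Modulo p this recurrence, taken
   at the indices prime to p, determines the a_n, and the Stirling expression
   satisfies it: row p - k of the Stirling numbers is obtained from row p - k - 1
   through [s+1, j+1] = s [s, j+1] + [s, j] with s = -(k+1) in F_p, and row p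
   is read off prod_(m < p) (X + m) = X^p - X.  Reducing the recurrence needs
   the a_n with n < p^2 to be p-integral; at n = (r+1) p this follows from the
   formula itself, whose case k = p - 1 says a_(n-1) + a_(n-p) = 0 in F_p. *)

Lemma sum_ord_eq_mul (R : nzSemiRingType) n i (F : nat -> R) :
  \sum_(j < n) (j == i :> nat)%:R * F j = if (i < n)%N then F i else 0.
Proof.
rewrite -(big_ord1_eq +%R) [RHS]big_mkcond; apply: eq_bigr => j _.
by case: eqP; rewrite ?mul1r ?mul0r.
Qed.

Lemma natr_Fp_eq0 p n : prime p -> (n%:R == 0 :> 'F_p) = (p %| n)%N.
Proof. by move=> p_pr; rewrite (dvdn_pcharf (pchar_Fp p_pr)). Qed.

Lemma intr_Fp_eq0 p (z : int) : prime p -> (z%:~R == 0 :> 'F_p) = (p %| z)%Z.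
Proof. by move=> p_pr; rewrite (dvdz_pcharf (pchar_Fp p_pr)). Qed.

Lemma stirling1E (R : comNzRingType) n i :
  (stirling1 n i)%:~R = (\prod_(m < n) ('X + m%:R%:P) : {poly R})`_i.
Proof.
rewrite /stirling1 -(coef_map intr) rmorph_prod.
by under eq_bigr do rewrite rmorphD /= map_polyX map_polyC /= -pmulrn.
Qed.

Lemma stirling10 i : stirling1 0 i = (i == 0)%:R.
Proof. by rewrite /stirling1 big_ord0 coef1. Qed.

Lemma stirling1S0 n : stirling1 n.+1 0 = 0.
Proof. by rewrite /stirling1 big_ord_recl /= addr0 coefXM. Qed.

Lemma stirling1SS n i :
  stirling1 n.+1 i.+1 = n%:R * stirling1 n i.+1 + stirling1 n i.
Proof.
rewrite /stirling1 big_ord_recr /= mulrDr coefD coefMX coefMC addrC mulrC.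
by rewrite natz.
Qed.

Lemma prod_XaddC_Fp p : prime p ->
  \prod_(m < p) ('X + m%:R%:P) = 'X^p - 'X :> {poly 'F_p}.
Proof.
move=> p_pr; have := finField_genPoly 'F_p; rewrite card_Fp // => ->.
rewrite (reindex_inj oppr_inj) /=.
under [RHS]eq_bigr do rewrite polyCN opprK -[X in X%:P]natr_Zp.
by rewrite -!(big_mkord xpredT (fun m : nat => 'X + (m%:R : 'F_p)%:P)) Fp_cast.
Qed.

Lemma stirling1_prime_Fp p i : prime p ->
  (stirling1 p i)%:~R = (i == p)%:R - (i == 1)%:R :> 'F_p.
Proof. by move=> p_pr; rewrite stirling1E prod_XaddC_Fp // coefB coefXn coefX. Qed.

Section StirlingSolution.
Variable p : nat.
Hypothesis p_pr : prime p.
Variables (a : nat -> 'F_p) (N : nat).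
Hypothesis a0 : a 0 = 1.
Hypothesis a_rec : forall m, (0 < m < N)%N -> ~~ (p %| m)%N ->
  m%:R * a m = a m.-1 + (p <= m)%N%:R * a (m - p)%N.

Let c j := a (j * p) + (j == p.-1)%:R.

(* [S s r.+1] is the sum of the statement for row [r]; [S s 0 = 0] stands for
   the missing row [-1]. *)
Let S s r := \sum_(j < r) (stirling1 s j.+1)%:~R * c (r.-1 - j).

Let p_gt1 : (1 < p)%N. Proof. exact: prime_gt1. Qed.

Lemma S_succ s r : (0 < s)%N -> S s.+1 r.+1 = s%:R * S s r.+1 + S s r.
Proof.
case: s => // s _; rewrite /S.
under eq_bigr do rewrite stirling1SS intrD intrM rmorph_nat mulrDl -mulrA.
rewrite big_split -big_distrr /= [X in _ + X]big_ord_recl stirling1S0 mul0r add0r.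
by apply: congr1; apply: eq_bigr => j _; rewrite /= subnS predn_sub.
Qed.

Lemma S_prime r : (r < p)%N -> S p r.+1 = - a (r * p).
Proof.
move=> r_lt; rewrite /S.
have eqSp j : (j.+1 == p) = (j == p.-1).
  by rewrite -[in LHS](prednK (prime_gt0 p_pr)).
under eq_bigr do rewrite stirling1_prime_Fp // eqSp eqSS mulrBl.
rewrite sumrB !(sum_ord_eq_mul _ _ _ (fun j => c (r - j)%N)) subn0 ltn0Sn /c.
case: leqP => r_p; first by rewrite ltn_eqF // sub0r addr0.
have -> : r = p.-1 by lia.
have p1_gt0 : (0 < p.-1)%N by lia.
rewrite subnn mul0n a0 eqxx [0 == _]eq_sym gtn_eqF // addr0 mulr1n.
by rewrite opprD addrCA subrr addr0.
Qed.

Lemma stirling_solution_step r k : (k.+1 < p)%N -> (r * p + k.+1 < N)%N ->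
  a (r * p + k) = (-1) ^+ k.+1 * S (p - k) r.+1 ->
  (p <= r * p + k.+1)%N%:R * a (r * p + k.+1 - p) =
    (-1) ^+ k.+2 * S (p - k.+1) r ->
  a (r * p + k.+1) = (-1) ^+ k.+2 * S (p - k.+1) r.+1.
Proof.
move=> k_lt N_lt a_left a_up.
have k1_neq0 : k.+1%:R != 0 :> 'F_p by rewrite natr_Fp_eq0 // gtnNdvd.
have pk_eq : (p - k = (p - k.+1).+1)%N by lia.
have pk_gt0 : (0 < p - k.+1)%N by lia.
have pk_Fp : (p - k.+1)%:R = - k.+1%:R :> 'F_p.
  by rewrite natrB ?pchar_Fp_0 ?sub0r // ltnW.
have m_ndvd : ~~ (p %| r * p + k.+1)%N.
  by rewrite dvdn_addr ?dvdn_mull // gtnNdvd.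
have := a_rec (r * p + k.+1) _ m_ndvd; rewrite N_lt addnS => /(_ isT) /=.
rewrite -!addnS a_up a_left natrD natrM pchar_Fp_0 // mulr0 add0r => a_rec_m.
apply: (mulfI k1_neq0); rewrite a_rec_m pk_eq S_succ // pk_Fp !exprS.
ring.
Qed.

Lemma stirling_solution r k : (k < p)%N -> (r < p)%N -> (r * p + k < N)%N ->
  a (r * p + k) = (-1) ^+ k.+1 * S (p - k) r.+1.
Proof.
elim: r k => [|r IHr] k; elim: k => [|k IHk] k_lt r_lt N_lt;
  try by rewrite addn0 subn0 S_prime // expr1 mulN1r opprK.
- apply: stirling_solution_step (IHk _ _ _) _ => //; try lia.
  by rewrite mul0n add0n leqNgt k_lt mul0r /S big_ord0 mulr0.
- apply: stirling_solution_step (IHk _ _ _) _ => //; try lia.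
  rewrite mulSn -addnA leq_addr addKn mul1r.
  by apply: IHr; lia.
Qed.

(* The recurrence at m = (r+1) p, where m%:R = 0, holds automatically. *)
Lemma stirling_solution_mulp r : (r.+1 < p)%N -> (r.+1 * p <= N)%N ->
  a (r.+1 * p).-1 + a (r * p) = 0.
Proof.
move=> r_lt N_le.
have -> : (r.+1 * p).-1 = (r * p + p.-1)%N by rewrite mulSn; lia.
rewrite stirling_solution; try lia.
have -> : (p - p.-1 = 1)%N by lia.
rewrite prednK ?prime_gt0 //.
have := @expf_card 'F_p (-1); rewrite card_Fp // => ->.
rewrite /S big_ord_recl big1 => [|j _]; last first.
  by rewrite stirling1SS !stirling10 mul0r.
rewrite (stirling1SS 0 0) !stirling10 eqxx /c subn0 mul0r add0r /= ltn_eqF; last lia.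
by rewrite mul1r !addr0 mulN1r addNr.
Qed.

End StirlingSolution.

Lemma numq_frac_cross (u v : int) : v != 0 ->
  numq (u%:~R / v%:~R) * v = u * denq (u%:~R / v%:~R).
Proof.
move=> v_neq0; apply: (@intr_inj rat); rewrite !intrM numqE.
by field; rewrite intr_eq0.
Qed.

Lemma denq_intr_neq0 (x : rat) : (denq x)%:~R != 0 :> rat.
Proof. by rewrite intr_eq0 denq_neq0. Qed.

Section PIntegral.
Variable p : nat.
Hypothesis p_pr : prime p.

Definition pintegral (x : rat) := (denq x)%:~R != 0 :> 'F_p.

Lemma pintegral_frac (u v : int) :
  v%:~R != 0 :> 'F_p -> pintegral (u%:~R / v%:~R).
Proof.
move=> v_neq0; set x := u%:~R / v%:~R.
rewrite /pintegral intr_Fp_eq0 //; apply/negP => p_den.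
have : (numq x * v)%:~R == 0 :> 'F_p.
  rewrite numq_frac_cross ?intr_Fp_eq0 ?dvdz_mull //.
  by apply: contraNneq v_neq0 => ->.
rewrite intrM mulf_eq0 (negbTE v_neq0) orbF intr_Fp_eq0 // => p_num.
have := coprime_dvdl p_num (coprime_num_den x).
by rewrite prime_coprime // => /negP.
Qed.

Lemma redp_frac (u v : int) : v%:~R != 0 :> 'F_p ->
  redp p (u%:~R / v%:~R) = u%:~R / v%:~R.
Proof.
move=> v_neq0; have den_neq0 := pintegral_frac u v v_neq0.
have v_neq0Z : v != 0 by apply: contraNneq v_neq0 => ->.
by apply/eqP; rewrite /redp eqr_div // -!intrM numq_frac_cross.
Qed.

Section Closure.
Variables x y : rat.
Hypotheses (x_int : pintegral x) (y_int : pintegral y).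

Let den_neq0 : ((denq x * denq y)%:~R : 'F_p) != 0.
Proof. by rewrite intrM mulf_neq0. Qed.

Let addE :
  x + y = (numq x * denq y + numq y * denq x)%:~R / (denq x * denq y)%:~R.
Proof.
rewrite -[x in LHS]divq_num_den -[y in LHS]divq_num_den intrD !intrM.
by field; rewrite !denq_intr_neq0.
Qed.

Let mulE : x * y = (numq x * numq y)%:~R / (denq x * denq y)%:~R.
Proof.
rewrite -[x in LHS]divq_num_den -[y in LHS]divq_num_den !intrM.
by field; rewrite !denq_intr_neq0.
Qed.

Lemma pintegralD : pintegral (x + y).
Proof. by rewrite addE pintegral_frac. Qed.

Lemma pintegralM : pintegral (x * y).
Proof. by rewrite mulE pintegral_frac. Qed.

Lemma redpD : redp p (x + y) = redp p x + redp p y.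
Proof. by rewrite addE redp_frac // /redp intrD !intrM; field; apply/andP. Qed.

Lemma redpM : redp p (x * y) = redp p x * redp p y.
Proof. by rewrite mulE redp_frac // /redp !intrM; field; apply/andP. Qed.

End Closure.

Lemma pintegral_nat n : pintegral n%:R.
Proof. by rewrite /pintegral pmulrn denq_int oner_neq0. Qed.

Lemma redp_nat n : redp p n%:R = n%:R.
Proof. by rewrite /redp pmulrn numq_int denq_int divr1. Qed.

Lemma pintegralV x : redp p x != 0 -> pintegral x^-1.
Proof.
rewrite /redp -[x in pintegral x^-1]divq_num_den invf_div => rx_neq0.
by apply: pintegral_frac; apply: contraNneq rx_neq0 => ->; rewrite mul0r.
Qed.

Lemma pintegral_divp x : pintegral x -> redp p x = 0 -> pintegral (x / p%:R).
Proof.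
move=> x_int /eqP; rewrite /redp mulf_eq0 invr_eq0 (negbTE x_int) orbF.
rewrite intr_Fp_eq0 // => p_num.
have -> : x / p%:R = (numq x %/ p)%Z%:~R / (denq x)%:~R.
  rewrite -[x in LHS]divq_num_den -{1}(divzK p_num) intrM pmulrn.
  by field; rewrite denq_intr_neq0 pnatr_eq0 -lt0n prime_gt0.
exact: pintegral_frac.
Qed.

End PIntegral.

Lemma coef_exp_lt (R : nzRingType) (P : {poly R}) m n :
  P`_0 = 0 -> (n < m)%N -> (P ^+ m)`_n = 0.
Proof.
move=> P0; elim: m n => [|m IHm] n // n_lt.
rewrite exprS coefM big1 // => -[[|j] j_lt] _ /=; first by rewrite P0 mul0r.
by rewrite IHm ?mulr0 //; lia.
Qed.

Definition ps_trunc (N : nat) (f : ps) : {poly rat} := \poly_(i < N) f i.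

Lemma ps_pow_trunc f m n N :
  (n < N)%N -> ps_pow f m n = (ps_trunc N f ^+ m)`_n.
Proof.
elim: m n => [|m IHm] n n_lt; first by rewrite expr0 coef1.
rewrite exprS coefM /ps_pow iterS -/(ps_pow f m); apply: eq_bigr => j _.
have j_lt := ltn_ord j; rewrite coef_poly ifT; [rewrite IHm //|]; lia.
Qed.

Definition exp_trunc {R : numFieldType} (M : nat) (P : {poly R}) :=
  \sum_(m < M) (m`!%:R^-1 : R) *: P ^+ m.

Lemma ps_exp_trunc f n M N : f 0%N = 0 -> (n < M)%N -> (n < N)%N ->
  ps_exp f n = (exp_trunc M (ps_trunc N f))`_n.
Proof.
move=> f0 n_ltM n_ltN; rewrite /ps_exp /exp_trunc coef_sum.
rewrite (big_ord_widen M (fun m => ps_pow f m n / m`!%:R)) // big_mkcond /=.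
apply: eq_bigr => -[m m_lt] _ /=; rewrite coefZ mulrC.
case: ltnP => [m_le|n_lt]; first by rewrite (ps_pow_trunc _ _ _ _ n_ltN).
by rewrite coef_exp_lt ?mulr0 // coef_poly; case: ifP.
Qed.

Lemma deriv_exp_trunc (R : numFieldType) M (P : {poly R}) :
  (exp_trunc M.+1 P)^`() = exp_trunc M P * P^`().
Proof.
rewrite /exp_trunc raddf_sum big_ord_recl /= derivZ derivC scaler0 add0r.
rewrite mulr_suml; apply: eq_bigr => m _.
rewrite derivZ deriv_exp /bump /= add1n -scaler_nat scalerA factS natrM invfM.
by rewrite mulrAC mulVf ?pnatr_eq0 // mul1r -scalerAl mulrC.
Qed.

Lemma ps_exp_rec f n : f 0%N = 0 ->
  n.+1%:R * ps_exp f n.+1 =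
    \sum_(j < n.+1) ps_exp f j * ((n - j).+1%:R * f (n - j).+1).
Proof.
move=> f0; have := congr1 (fun P : {poly rat} => P`_n)
  (deriv_exp_trunc _ n.+1 (ps_trunc n.+2 f)).
rewrite /= coef_deriv -(ps_exp_trunc _ _ _ _ f0) // coefM mulr_natl => ->.
apply: eq_bigr => -[j j_lt] _ /=.
rewrite -(ps_exp_trunc _ _ _ _ f0) ?coef_deriv ?coef_poly ?ifT ?mulr_natl //.
all: lia.
Qed.

Section ArtinHasse.
Variable p : nat.
Hypothesis p_pr : prime p.

Lemma pow_eq_small t : (0 < t < p * p)%N ->
  [exists i : 'I_t.+1, p ^ i == t]%N = (t == 1)%N || (t == p).
Proof.
move=> /andP[t_gt0 t_lt]; have p_gt1 := prime_gt1 p_pr.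
apply/existsP/orP => [[[[|[|i]] _] /eqP /= t_eq]|[] /eqP ->].
- by left; rewrite -t_eq.
- by right; rewrite -t_eq expn1.
- have := expn_gt0 p i; rewrite -t_eq !expnS in t_lt; nia.
- by exists ord0.
- have lt1p : (1 < p.+1)%N by rewrite ltnS ltnW.
  by exists (Ordinal lt1p); rewrite expn1.
Qed.

Lemma AH_arg_small t : (0 < t < p * p)%N ->
  t%:R * AH_arg p t = (t == 1)%N%:R + (t == p)%:R.
Proof.
move=> t_range; rewrite /AH_arg pow_eq_small //; have p_gt1 := prime_gt1 p_pr.
case: (eqVneq t 1) => [->|t_neq1] /=; first by rewrite ltn_eqF // mulr1 addr0.
case: (eqVneq t p) => [->|t_neqp] /=; last by rewrite mulr0 addr0.
by rewrite divff ?add0r // pnatr_eq0 -lt0n ltnW.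
Qed.

Lemma AH_arg0 : AH_arg p 0 = 0.
Proof. by rewrite /AH_arg; case: ifP; rewrite ?invr0. Qed.

Lemma AH0 : AH p 0 = 1.
Proof. by rewrite /AH /ps_exp big_ord1 /= /ps_one /= divr1. Qed.

Lemma AH_rec n : (0 < n < p * p)%N ->
  n%:R * AH p n = AH p n.-1 + (p <= n)%N%:R * AH p (n - p)%N.
Proof.
case: n => // n /andP[_ n_lt]; rewrite /AH ps_exp_rec ?AH_arg0 //=.
have weight (j : 'I_n.+1) : (n - j).+1%:R * AH_arg p (n - j).+1 =
    (j == n :> nat)%:R + (j == n.+1 - p :> nat)%N%:R * (p <= n.+1)%N%:R.
  have := ltn_ord j; rewrite AH_arg_small; last by apply/andP; split; lia.
  move=> j_le; congr (_%:R + _); first by apply/eqP/eqP; lia.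
  case: leqP => p_le; rewrite ?mulr1 ?mulr0.
    by congr _%:R; apply/eqP/eqP; lia.
  by apply/eqP; rewrite pnatr_eq0 eqb0; apply/eqP; lia.
under eq_bigr do rewrite weight mulrDr mulrA ![ps_exp _ _ * _]mulrC -mulrA.
rewrite big_split sum_ord_eq_mul /= ltnSn.
rewrite (sum_ord_eq_mul _ _ _ (fun j => ps_exp (AH_arg p) j * (p <= n.+1)%N%:R)).
by rewrite ifT ?[_ * (p <= _)%:R]mulrC //; lia.
Qed.

End ArtinHasse.

Section Reduction.
Variable p : nat.
Hypothesis p_pr : prime p.

Lemma Ep_coef0 : Ep_coef p 0 = 1.
Proof. by rewrite /Ep_coef AH0 -(mulr1n 1) redp_nat. Qed.

Lemma Ep_coef_rec N : (N <= p * p)%N ->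
  (forall m, (m < N)%N -> pintegral p (AH p m)) ->
  forall m, (0 < m < N)%N ->
  m%:R * Ep_coef p m = Ep_coef p m.-1 + (p <= m)%N%:R * Ep_coef p (m - p)%N.
Proof.
move=> N_le AH_int m /andP[m_gt0 m_lt].
have int_le k : (k <= m)%N -> pintegral p (AH p k).
  by move=> k_le; apply: AH_int; apply: leq_ltn_trans m_lt.
rewrite /Ep_coef -redp_nat -redpM ?pintegral_nat ?int_le //.
rewrite AH_rec ?m_gt0 ?(leq_trans m_lt) //.
rewrite redpD ?pintegralM ?pintegral_nat ?int_le ?leq_pred ?leq_subr //.
by rewrite redpM ?pintegral_nat ?int_le ?leq_subr // redp_nat.
Qed.

Lemma AH_pintegral n : (n < p * p)%N -> pintegral p (AH p n).
Proof.
have p_gt0 := prime_gt0 p_pr.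
elim/ltn_ind: n => -[_ _|n IH n_lt]; first by rewrite AH0 -(mulr1n 1) pintegral_nat.
have AH_int k : (k <= n)%N -> pintegral p (AH p k) by move=> k_le; apply: IH; lia.
set x := AH p n + (p <= n.+1)%N%:R * AH p (n.+1 - p)%N.
have x_int : pintegral p x.
  by rewrite pintegralD ?pintegralM ?pintegral_nat ?AH_int //; lia.
have n1_neq0 : n.+1%:R != 0 :> rat by rewrite pnatr_eq0.
have -> : AH p n.+1 = x / n.+1%:R.
  apply: (mulfI n1_neq0).
  by rewrite (AH_rec _ p_pr) // [RHS]mulrCA mulfV ?mulr1.
have [p_dvd|p_ndvd] := boolP (p %| n.+1)%N; last first.
  apply: pintegralM => //; apply: pintegralV => //.
  by rewrite redp_nat natr_Fp_eq0.
have [[|r] n1_eq] := dvdnP p_dvd; first by rewrite n1_eq.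
have r_lt : (r.+1 < p)%N by nia.
have x_red : redp p x = 0.
  have p_le : (p <= n.+1)%N by lia.
  rewrite redpD ?pintegralM ?pintegral_nat ?AH_int //; try lia.
  rewrite redpM ?pintegral_nat ?AH_int //; try lia.
  rewrite !redp_nat p_le mul1r.
  have Ep_rec := Ep_coef_rec n.+1 (ltnW n_lt) AH_int.
  have := stirling_solution_mulp p p_pr _ _ Ep_coef0
    (fun m m_range _ => Ep_rec m m_range) r r_lt.
  have rp_eq : (r * p = n.+1 - p)%N by rewrite n1_eq mulSn addKn.
  by rewrite -n1_eq rp_eq leqnn => /(_ isT).
rewrite n1_eq mulnC natrM invfM mulrA.
apply: pintegralM => //; first exact: pintegral_divp.
by apply: pintegralV => //; rewrite redp_nat natr_Fp_eq0 // gtnNdvd.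
Qed.

End Reduction.

Theorem proposition1p4 (p : nat) (hp : prime p) (k r : nat)
    (hk : (k < p)%N) (hr : (r < p)%N) :
  let a := Ep_coef p in
  let c := fun j : nat => a (j * p)%N + ((j == p.-1)%N)%:R in
  a (r * p + k)%N =
    (-1) ^+ k.+1 *
    \sum_(j < r.+1) ((stirling1 (p - k) j.+1)%:~R * c (r - j)%N).
Proof.
move=> a c.
have Ep_rec := Ep_coef_rec p hp _ (leqnn _) (AH_pintegral p hp).
have rpk_lt : (r * p + k < p * p)%N by nia.
exact: (stirling_solution p hp _ _ (Ep_coef0 p)
  (fun m m_range _ => Ep_rec m m_range) r k hk hr rpk_lt).
Qed.
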